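(* Let $p>2$, $\mathcal{C}=\{x\in\mathbb{R}^m:\|x\|_p\leq1\}$, and let $f:\mathbb{R}^m\to\mathbb{R}$ be convex and $L$-smooth (its gradient is $L$-Lipschitz). Assume there is $c>0$ with $\inf_{x\in\mathcal{C}}\|\nabla f(x)\|>c$, and assume the minimizer $x^*$ of $f$ over $\mathcal{C}$ has all coordinates (in the canonical basis) nonzero. Then the Frank-Wolfe algorithm, run with either exact line-search or short steps, converges linearly: there exist $K>0$ and $\rho\in(0,1)$ such that $f(x_t)-f(x^* )\leq K\rho^t$ for all $t\geq0$.
   Context: The Frank-Wolfe algorithm on $\mathcal{C}$ starts from $x_0\in\mathcal{C}$ and iterates $v_t\in\arg\min_{v\in\mathcal{C}}\langle\nabla f(x_t),v\rangle$, $x_{t+1}=x_t+\gamma_t(v_t-x_t)$, where with exact line-search $\gamma_t\in\arg\min_{\gamma\in[0,1]}f(x_t+\gamma(v_t-x_t))$, and with short steps $\gamma_t=\min\{1,\langle\nabla f(x_t),x_t-v_t\rangle/(L\|v_t-x_t\|^2)\}$ (with $\|\cdot\|$ the norm with respect to which $f$ is $L$-smooth). *)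

From HB Require Import structures.
From mathcomp Require Import all_boot all_order all_algebra.
From mathcomp Require Import all_classical all_reals all_analysis.
Set Implicit Arguments. Unset Strict Implicit. Unset Printing Implicit Defensive.
Import Order.TTheory GRing.Theory Num.Theory.
Import numFieldNormedType.Exports.
Local Open Scope ring_scope.

Section FW.
Variables (R : realType) (m : nat).
Implicit Types (x y u v : 'rV[R]_m).

Definition dotp u v : R := \sum_(i < m) u ord0 i * v ord0 i.

Definition enorm u : R := Num.sqrt (dotp u u).

Definition lpnorm (p : R) u : R := (\sum_(i < m) `|u ord0 i| `^ p) `^ p^-1.

Definition lpball (p : R) : set 'rV[R]_m := [set x | lpnorm p x <= 1].

Definition is_gradient (f : 'rV[R]_m -> R) (g : 'rV[R]_m -> 'rV[R]_m) :=
  forall x, differentiable f x /\ forall h, 'd f x h = dotp (g x) h.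

Definition convex_fun (f : 'rV[R]_m -> R) :=
  forall x y (l : R), 0 <= l <= 1 ->
    f (l *: x + (1 - l) *: y) <= l * f x + (1 - l) * f y.

Definition L_smooth (L : R) (g : 'rV[R]_m -> 'rV[R]_m) :=
  forall x y, enorm (g x - g y) <= L * enorm (x - y).

Definition FW_iterates (C : set 'rV[R]_m) (g : 'rV[R]_m -> 'rV[R]_m)
  (x v : nat -> 'rV[R]_m) (gam : nat -> R) :=
  C (x 0%N) /\
  forall t, [/\ C (v t),
                (forall w, C w -> dotp (g (x t)) (v t) <= dotp (g (x t)) w) &
                x t.+1 = x t + gam t *: (v t - x t)].

Definition exact_ls_step (f : 'rV[R]_m -> R) (x v : nat -> 'rV[R]_m)
  (gam : nat -> R) :=
  forall t, 0 <= gam t <= 1 /\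
    forall c : R, 0 <= c <= 1 ->
      f (x t + gam t *: (v t - x t)) <= f (x t + c *: (v t - x t)).

Definition short_step (L : R) (g : 'rV[R]_m -> 'rV[R]_m) (x v : nat -> 'rV[R]_m)
  (gam : nat -> R) :=
  forall t, gam t = Num.min 1
    (dotp (g (x t)) (x t - v t) / (L * enorm (v t - x t) ^+ 2)).

End FW.

From HB Require Import structures.
From mathcomp Require Import all_boot all_order all_algebra.
From mathcomp Require Import all_classical all_reals all_analysis.
From mathcomp Require Import ring lra.
Import Order.TTheory GRing.Theory Num.Theory.
Import numFieldNormedType.Exports.
Local Open Scope ring_scope.
Set Implicit Arguments.
Unset Strict Implicit.
Unset Printing Implicit Defensive.

(* For p > 2 the l_p ball is not strongly convex, but it is uniformly curved at every
   point x* without zero coordinates: since t |-> |t|^p is strongly convex away from 0,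
   the midpoint of x* and any y of the ball lies inside the ball by k0 |y - x*|^2.
   Scaling that midpoint back to the ball and using that x* minimizes the linear form
   <a, .> for the nonzero gradient a of f at x* yields the growth condition
   k |y - x*|^2 <= <a, y - x*> on the ball.  With convexity and L-smoothness it bounds
   k |x_t - x*|^2 and the squared length |v_t - x_t|^2 of the Frank-Wolfe direction by
   multiples of the primal gap f x_t - min f, and the descent lemma then shows that the
   short step, hence also exact line-search, contracts the gap by a fixed factor. *)

Definition segment_closed (R : realType) (m : nat) (C : set 'rV[R]_m) :=
  forall u w (l : R), C u -> C w -> 0 <= l <= 1 -> C (u + l *: (w - u)).

Section DotProduct.
Variables (R : realType) (m : nat).
Implicit Types (u w y : 'rV[R]_m).

Local Notation dotp := (@dotp R m).

Definition sqnorm u := dotp u u.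

Lemma dotpC u w : dotp u w = dotp w u.
Proof. by apply: eq_bigr => i _; rewrite mulrC. Qed.

Lemma dotpDl u w y : dotp (u + w) y = dotp u y + dotp w y.
Proof. by rewrite /dotp -big_split; apply: eq_bigr => i _; rewrite mxE mulrDl. Qed.

Lemma dotpZl (a : R) u w : dotp (a *: u) w = a * dotp u w.
Proof. by rewrite /dotp mulr_sumr; apply: eq_bigr => i _; rewrite mxE mulrA. Qed.

Lemma dotpNl u w : dotp (- u) w = - dotp u w.
Proof. by rewrite -scaleN1r dotpZl mulN1r. Qed.

Lemma dotpBl u w y : dotp (u - w) y = dotp u y - dotp w y.
Proof. by rewrite dotpDl dotpNl. Qed.

Lemma dotpDr u w y : dotp y (u + w) = dotp y u + dotp y w.
Proof. by rewrite dotpC dotpDl !(dotpC y). Qed.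

Lemma dotpZr (a : R) u w : dotp w (a *: u) = a * dotp w u.
Proof. by rewrite dotpC dotpZl dotpC. Qed.

Lemma dotpNr u w : dotp w (- u) = - dotp w u.
Proof. by rewrite dotpC dotpNl dotpC. Qed.

Lemma dotpBr u w y : dotp y (u - w) = dotp y u - dotp y w.
Proof. by rewrite dotpDr dotpNr. Qed.

Lemma sqnorm_ge0 u : 0 <= sqnorm u.
Proof. by apply: sumr_ge0 => i _; rewrite -expr2 sqr_ge0. Qed.

Lemma sqnorm_eq0 u : sqnorm u = 0 -> u = 0.
Proof.
move=> u0; apply/rowP => i; rewrite mxE; apply/eqP; rewrite -sqrf_eq0; apply/eqP.
move: i (isT : true); apply/psumr_eq0P => [i _|]; first exact: sqr_ge0.
by rewrite -[RHS]u0; apply: eq_bigr => i _; rewrite expr2.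
Qed.

Lemma enorm_sqr u : enorm u ^+ 2 = sqnorm u.
Proof. by rewrite /enorm sqr_sqrtr // sqnorm_ge0. Qed.

Lemma sqnormZ (a : R) u : sqnorm (a *: u) = a ^+ 2 * sqnorm u.
Proof. by rewrite /sqnorm dotpZl dotpZr mulrA expr2. Qed.

Lemma sqnormN u : sqnorm (- u) = sqnorm u.
Proof. by rewrite /sqnorm dotpNl dotpNr opprK. Qed.

Lemma sqnormD u w : sqnorm (u + w) = sqnorm u + 2 * dotp u w + sqnorm w.
Proof. by rewrite /sqnorm dotpDl !dotpDr (dotpC w u); ring. Qed.

Lemma sqnormB u w : sqnorm (u - w) = sqnorm u - 2 * dotp u w + sqnorm w.
Proof. by rewrite sqnormD sqnormN dotpNr; ring. Qed.

Lemma dotp_young u w (l : R) : dotp u w * (2 * l) <= sqnorm u + l ^+ 2 * sqnorm w.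
Proof. by have := sqnorm_ge0 (u - l *: w); rewrite sqnormB dotpZr sqnormZ; lra. Qed.

Lemma sqnormD_le u w : sqnorm (u + w) <= 2 * sqnorm u + 2 * sqnorm w.
Proof. by have := sqnorm_ge0 (u - w); rewrite sqnormB sqnormD; lra. Qed.

Lemma L_smooth_sqnorm (L : R) g : 0 <= L -> L_smooth L g ->
  forall u w, sqnorm (g u - g w) <= L ^+ 2 * sqnorm (u - w).
Proof.
move=> L0 gL u w; rewrite -!enorm_sqr -exprMn.
by rewrite ler_sqr ?nnegrE ?mulr_ge0 ?sqrtr_ge0.
Qed.

End DotProduct.

Section Powers.
Variable R : realType.

Lemma powR_convex (p l x y : R) : 1 <= p -> 0 <= l <= 1 -> 0 <= x -> 0 <= y ->
  (l * x + (1 - l) * y) `^ p <= l * x `^ p + (1 - l) * y `^ p.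
Proof.
move=> p1 /andP[l0 l1] x0 y0.
have := @convex_powR R p p1 (Itv01 l0 l1) x y.
by rewrite !inE /= !in_itv /= !andbT => /(_ x0 y0); rewrite !convRE.
Qed.

Lemma normr_powR_sqr (p x : R) : `|x| `^ p = (x ^+ 2) `^ (p / 2).
Proof.
have -> : `|x| `^ p = `|x| `^ (2 * (p / 2)) by congr (_ `^ _); field.
by rewrite powRrM powR_mulrn // real_normK ?num_real.
Qed.

Definition midpoint_modulus (p s : R) := (s ^+ 2 / 2) `^ (p / 2 - 1) / 4.

Lemma midpoint_modulus_gt0 (p s : R) : s != 0 -> 0 < midpoint_modulus p s.
Proof. by move=> s0; rewrite divr_gt0 // powR_gt0 // divr_gt0 // exprn_even_gt0. Qed.

Lemma powR_midpoint_le (p s t : R) : 2 < p ->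
  `|(s + t) / 2| `^ p <= (`|s| `^ p + `|t| `^ p) / 2 - midpoint_modulus p s * (t - s) ^+ 2.
Proof.
move=> p2; rewrite !normr_powR_sqr /midpoint_modulus.
set r := p / 2; have r1 : 1 < r by rewrite ltr_pdivlMr // mul1r.
set A := (s ^+ 2 + t ^+ 2) / 2; set B := ((s + t) / 2) ^+ 2; set d := ((t - s) / 2) ^+ 2.
(* B^r <= B A^(r-1) = A^r - d A^(r-1), where A^r is bounded by convexity and A >= s^2/2 *)
have d0 : 0 <= d := sqr_ge0 _.
have BAd : B = A - d by rewrite /A /B /d; field.
have B0 : 0 <= B := sqr_ge0 _.
have sA : s ^+ 2 / 2 <= A by rewrite ler_pM2r // lerDl sqr_ge0.
have A0 : 0 <= A by apply: le_trans sA; rewrite divr_ge0 // sqr_ge0.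
have powB : B `^ r <= B * A `^ (r - 1).
  rewrite -mulr_powRB1 ?(lt_trans _ r1) // ler_wpM2l // ge0_ler_powR ?nnegrE //.
    by rewrite subr_ge0 ltW.
  by rewrite BAd lerBlDr lerDl.
have powA : A `^ r <= (s ^+ 2) `^ r / 2 + (t ^+ 2) `^ r / 2.
  have := @powR_convex r (1/2) (s ^+ 2) (t ^+ 2) (ltW r1) _ (sqr_ge0 _) (sqr_ge0 _).
  have -> : 1 / 2 * s ^+ 2 + (1 - 1 / 2) * t ^+ 2 = A by rewrite /A; field.
  by move=> /(_ _)/le_trans; apply => //; lra.
have powsA : d * (s ^+ 2 / 2) `^ (r - 1) <= d * A `^ (r - 1).
  rewrite ler_wpM2l // ge0_ler_powR ?nnegrE ?subr_ge0 ?(ltW r1) //.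
  by rewrite divr_ge0 ?sqr_ge0.
have -> : (t - s) ^+ 2 = 4 * d by rewrite /d; field.
have : B * A `^ (r - 1) = A `^ r - d * A `^ (r - 1).
  by rewrite -[A `^ r]mulr_powRB1 ?(lt_trans _ r1) // BAd; ring.
lra.
Qed.

Lemma expRN_le (s : R) : 0 <= s <= 1 -> expR (- s) <= 1 - s / 2.
Proof.
move=> /andP[s0 s1].
rewrite expRN -[X in X <= _]mul1r ler_pdivrMr ?expR_gt0 //.
apply: le_trans (ler_wpM2l _ (expR_ge1Dx s)); last lra.
have : 0 <= s * (1 - s) by rewrite mulr_ge0 //; lra.
lra.
Qed.

End Powers.

Section LpBall.
Variables (R : realType) (m : nat) (p : R).
Implicit Types (a u w : 'rV[R]_m).

Local Notation dotp := (@dotp R m).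

Definition lpsum u := \sum_(i < m) `|u ord0 i| `^ p.

Lemma lpsum_ge0 u : 0 <= lpsum u.
Proof. by apply: sumr_ge0 => i _; apply: powR_ge0. Qed.

Lemma lpballE u : 0 < p -> lpball p u <-> lpsum u <= 1.
Proof.
move=> p0; rewrite /lpball /lpnorm -/(lpsum u) /=.
have E : lpsum u = (lpsum u `^ p^-1) `^ p.
  by rewrite -powRrM mulVf ?gt_eqF // powRr1 ?lpsum_ge0.
split => le1.
- rewrite E; apply: le_trans (ge0_ler_powR (ltW p0) _ _ le1) _;
    by rewrite ?nnegrE ?powR_ge0 ?powR1.
- have ip0 : 0 <= p^-1 by rewrite invr_ge0 ltW.
  apply: le_trans (ge0_ler_powR ip0 _ _ le1) _;
    by rewrite ?nnegrE ?lpsum_ge0 ?powR1.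
Qed.

Lemma lpsumZ (l : R) u : 0 <= l -> lpsum (l *: u) = l `^ p * lpsum u.
Proof.
move=> l0; rewrite /lpsum mulr_sumr; apply: eq_bigr => i _.
by rewrite mxE normrM (ger0_norm l0) powRM.
Qed.

Lemma lpsum_convex u w (l : R) : 1 <= p -> 0 <= l <= 1 ->
  lpsum (u + l *: (w - u)) <= l * lpsum w + (1 - l) * lpsum u.
Proof.
move=> p1 l01; have /andP[l0 l1] := l01; rewrite /lpsum !mulr_sumr -big_split /=.
apply: ler_sum => i _; rewrite !mxE.
have -> : u ord0 i + l * (w ord0 i - u ord0 i) = l * w ord0 i + (1 - l) * u ord0 i by ring.
apply: (le_trans _ (powR_convex p1 l01 (normr_ge0 _) (normr_ge0 _))).
rewrite ge0_ler_powR ?nnegrE ?(le_trans ler01 p1) ?addr_ge0 ?mulr_ge0 ?subr_ge0 //.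
have l0' : 0 <= 1 - l by rewrite subr_ge0.
by apply: le_trans (ler_normD _ _) _; rewrite !normrM (ger0_norm l0) (ger0_norm l0').
Qed.

Lemma lpball_segment_closed : 1 <= p -> segment_closed (@lpball R m p).
Proof.
move=> p1 u w l; have p0 : 0 < p by apply: lt_le_trans p1.
move=> /(lpballE _ p0) Cu /(lpballE _ p0) Cw l01; apply/(lpballE _ p0).
apply: le_trans (lpsum_convex u w p1 l01) _; case/andP: l01 => l0 l1.
have l0' : 0 <= 1 - l by rewrite subr_ge0.
by have := ler_wpM2l l0 Cw; have := ler_wpM2l l0' Cu; lra.
Qed.

Lemma lpball_dotp_min_lt0 a xs j : 0 < p -> a ord0 j != 0 ->
  (forall w, lpball p w -> dotp a xs <= dotp a w) -> dotp a xs < 0.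
Proof.
move=> p0 aj0 xs_min.
pose e : 'rV[R]_m := \row_i (if i == j then - Num.sg (a ord0 j) else 0).
apply: (le_lt_trans (xs_min e _)).
  apply/lpballE => //; rewrite /lpsum (bigD1 j) //= big1 => [|i /negbTE ij].
    by rewrite mxE eqxx normrN normr_sg aj0 powR1 addr0.
  by rewrite mxE ij normr0 powR0 // gt_eqF.
rewrite /dotp /e (bigD1 j) //= big1 => [|i /negbTE ij]; last by rewrite mxE ij mulr0.
by rewrite mxE eqxx addr0 mulrN mulrC -normrEsg oppr_lt0 normr_gt0.
Qed.

End LpBall.

Lemma exists_pos_lower_bound (R : realFieldType) (I : finType) (F : I -> R) :
  (forall i, 0 < F i) -> exists2 k, 0 < k & forall i, k <= F i.
Proof.
move=> Fpos; have Vge0 j : 0 <= (F j)^-1 by rewrite invr_ge0 ltW.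
exists (1 + \sum_i (F i)^-1)^-1 => [|i]; first by rewrite invr_gt0 ltr_wpDr ?sumr_ge0.
rewrite -[F i]invrK lef_pV2 ?posrE ?invr_gt0 ?ltr_wpDr ?sumr_ge0 // (bigD1 i) //=.
have : 0 <= \sum_(j | j != i) (F j)^-1 by rewrite sumr_ge0.
lra.
Qed.

Section LinearGrowth.
Variables (R : realType) (m : nat).
Implicit Types (a xs y : 'rV[R]_m).

Lemma lpsum_midpoint (p k : R) xs y : 2 < p ->
  (forall i, k <= midpoint_modulus p (xs ord0 i)) ->
  lpsum p (2^-1 *: (xs + y)) <= (lpsum p xs + lpsum p y) / 2 - k * sqnorm (y - xs).
Proof.
move=> p2 k_le; rewrite /lpsum /sqnorm /dotp -big_split /= mulr_suml mulr_sumr -sumrB.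
apply: ler_sum => i _; rewrite !mxE mulrC -expr2.
apply: le_trans (powR_midpoint_le (xs ord0 i) (y ord0 i) p2) _.
by rewrite lerD2l lerN2 ler_wpM2r ?sqr_ge0.
Qed.

Theorem lpball_linear_growth (p : R) a xs j : 2 < p -> a ord0 j != 0 ->
  lpball p xs -> (forall i, xs ord0 i != 0) ->
  (forall w, lpball p w -> dotp a xs <= dotp a w) ->
  exists2 k, 0 < k & forall y, lpball p y -> k * sqnorm (y - xs) <= dotp a (y - xs).
Proof.
move=> p2 aj0 Cxs xs_nz xs_min; have p0 : 0 < p by apply: lt_trans p2.
have /(lpballE _ p0) lp_xs := Cxs.
set beta := - dotp a xs.
have beta_gt0 : 0 < beta by rewrite oppr_gt0 (lpball_dotp_min_lt0 p0 aj0 xs_min).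
have [k0 k0_gt0 k0_le] := exists_pos_lower_bound (fun i => midpoint_modulus_gt0 p (xs_nz i)).
exists (beta * k0 / p) => [|y Cy]; first by rewrite !divr_gt0 ?mulr_gt0.
have /(lpballE _ p0) lp_y := Cy.
set Q := k0 * sqnorm (y - xs); set z := 2^-1 *: (xs + y).
have Q_ge0 : 0 <= Q by rewrite mulr_ge0 ?sqnorm_ge0 ?ltW.
have lp_z : lpsum p z <= 1 - Q.
  by have := lpsum_midpoint y p2 k0_le; rewrite -/z -/Q; lra.
have Q_le1 : Q <= 1 by have := lpsum_ge0 p z; lra.
(* z lies so deep inside the ball that it stays feasible when scaled up by expR (Q / p) *)
have Cw : lpball p (expR (Q / p) *: z).
  apply/(lpballE _ p0); rewrite lpsumZ ?expR_ge0 // -expRM divfK ?gt_eqF //.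
  rewrite -(expRxMexpNx_1 Q) ler_wpM2l ?expR_ge0 //; apply: le_trans lp_z _.
  exact: expR_ge1Dx.
have := xs_min _ Cw; rewrite dotpZr /z dotpZr dotpDr -/beta.
rewrite -ler_pdivrMl ?expR_gt0 // -expRN.
have Qp_le1 : Q / p <= 1 by rewrite ler_pdivrMr // mul1r; lra.
have /(ler_wpM2l (ltW beta_gt0)) : expR (- (Q / p)) <= 1 - Q / p / 2.
  by apply: expRN_le; rewrite Qp_le1 divr_ge0 ?(ltW p0).
have -> : dotp a xs = - beta by rewrite opprK.
have -> : beta * k0 / p * sqnorm (y - xs) = beta * Q / p by rewrite /Q; ring.
by rewrite dotpBr -/beta; lra.
Qed.

End LinearGrowth.

Section Gradient.
Variables (R : realType) (m : nat).
Variables (f : 'rV[R]_m -> R) (g : 'rV[R]_m -> 'rV[R]_m).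
Hypothesis f_grad : is_gradient f g.
Local Open Scope classical_set_scope.
Implicit Types (x y d : 'rV[R]_m).

Lemma is_derive_line x d (s : R) :
  is_derive s 1 (fun t : R => f (x + t *: d)) (dotp (g (x + s *: d)) d).
Proof.
set y := x + s *: d; have [df dfE] := f_grad y.
have quotE : (fun h : R => h^-1 *: (((fun t => f (x + t *: d)) \o shift s) (h *: 1)
             - f (x + s *: d))) = (fun h : R => h^-1 *: ((f \o shift y) (h *: d) - f y)).
  by apply/funext => h /=; rewrite [h *: 1]mulr1 /y scalerDl addrCA.
have D : derivable (fun t : R => f (x + t *: d)) s 1.
  by rewrite /derivable quotE; exact: diff_derivable.
apply: is_derive_eq (derivableP D) _.
by rewrite /derive quotE -/(derive f y d) deriveE // dfE.
Qed.

Lemma gradient_right_quotient x d :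
  (fun h : R => h^-1 * (f (x + h *: d) - f x)) @ 0^'+ --> dotp (g x) d.
Proof.
have [df dfE] := f_grad x; rewrite -dfE -deriveE; last exact: df.
have -> : (fun h : R => h^-1 * (f (x + h *: d) - f x)) =
          (fun h : R => h^-1 *: ((f \o shift x) (h *: d) - f x)).
  by apply/funext => h /=; rewrite [h *: d + x]addrC.
exact/cvg_dnbhs_at_right/diff_derivable.
Qed.

Lemma convex_gradient_le x y : convex_fun f -> f x + dotp (g x) (y - x) <= f y.
Proof.
move=> f_conv; rewrite -lerBrDl.
apply: (cvgr_to_le (@gradient_right_quotient x (y - x))).
near=> h; have h0 : 0 < h by near: h; exact: nbhs_right_gt.
have h1 : h < 1 by near: h; exact: nbhs_right_lt.
rewrite -(ler_pM2l h0) mulrA mulfV ?gt_eqF // mul1r.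
have := f_conv y x h; rewrite (ltW h0) (ltW h1) => /(_ isT).
have -> : h *: y + (1 - h) *: x = x + h *: (y - x).
  by rewrite scalerBr scalerBl scale1r addrCA addrC.
lra.
Unshelve. all: by end_near.
Qed.

Lemma local_min_gradient_ge0 x d :
  (forall h : R, 0 < h < 1 -> f x <= f (x + h *: d)) -> 0 <= dotp (g x) d.
Proof.
move=> x_min; apply: (cvgr_to_ge (@gradient_right_quotient x d)).
near=> h; have h0 : 0 < h by near: h; exact: nbhs_right_gt.
have h1 : h < 1 by near: h; exact: nbhs_right_lt.
by rewrite mulr_ge0 ?invr_ge0 ?(ltW h0) // subr_ge0 x_min // h0 h1.
Unshelve. all: by end_near.
Qed.

Lemma segment_closed_min_variational (C : set 'rV[R]_m) xs :
  segment_closed C -> C xs -> (forall y, C y -> f xs <= f y) ->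
  forall w, C w -> dotp (g xs) xs <= dotp (g xs) w.
Proof.
move=> C_seg Cxs xs_min w Cw; rewrite -subr_ge0 -dotpBr.
apply: local_min_gradient_ge0 => h /andP[h0 h1].
by apply/xs_min/C_seg => //; rewrite !ltW.
Qed.

Lemma smooth_descent (L : R) x d (s : R) : 0 < L -> L_smooth L g -> 0 <= s <= 1 ->
  f (x + s *: d) <= f x + s * dotp (g x) d + L / 2 * s ^+ 2 * sqnorm d.
Proof.
move=> L0 g_smooth /andP[s0 s1].
set a := dotp (g x) d; set b := L / 2 * sqnorm d.
pose psi t := f (x + t *: d) - (a * t + b * t ^+ 2).
have psi_der (t : R) : is_derive t 1 psi (dotp (g (x + t *: d)) d - (a + b * (2 * t))).
  apply: is_deriveB; first exact: is_derive_line.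
  have -> : (fun t : R => a * t + b * t ^+ 2) = a *: id + b *: id ^+ 2.
    by apply/funext => u /=; rewrite !fctE /= expr2.
  have D := is_deriveD (is_deriveZ a (is_derive_id t 1))
    (is_deriveZ b (@is_deriveX _ _ id 2 t 1 1 (is_derive_id t 1))).
  by apply: is_derive_eq D _; rewrite /GRing.scale /= !mulr1 expr1.
have psi_derivable (t : R) : derivable psi t 1 by [].
(* psi' t = <g (x + t d) - g x, d> - L t |d|^2 <= 0 by the Lipschitz bound on g *)
have : psi s <= psi 0.
  apply: (ler0_derive1_nincr (fun t _ => psi_derivable t) _ _ (lexx 0) s0 s1); last first.
    by apply: derivable_within_continuous => t _; exact: psi_derivable.
  move=> t; rewrite in_itv /= => /andP[t0 t1]; rewrite derive1E derive_val.
  set u := g (x + t *: d) - g x.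
  have u_sq : sqnorm u <= L ^+ 2 * (t ^+ 2 * sqnorm d).
    have := L_smooth_sqnorm (ltW L0) g_smooth (x + t *: d) x.
    by rewrite addrAC subrr add0r sqnormZ.
  have Lt : 0 < L * t by rewrite mulr_gt0.
  have : dotp u d * (2 * (L * t)) <= L * t * sqnorm d * (2 * (L * t)).
    by apply: le_trans (dotp_young u d (L * t)) _; rewrite exprMn; lra.
  rewrite ler_pM2r ?mulr_gt0 // /u dotpBl -/a /b; lra.
rewrite /psi scale0r addr0 mulr0 expr0n /= mulr0 addr0 subr0 /b; lra.
Qed.

End Gradient.

Lemma short_step_decrease (R : realFieldType) (L M G N h : R) :
  0 < L -> 0 < M -> 0 <= h <= G -> 0 <= N <= M * h -> (N = 0 -> G = 0) ->
  - Num.min 1 (G / (L * N)) * G + L / 2 * Num.min 1 (G / (L * N)) ^+ 2 * N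
    <= - Num.min (1 / 2) (1 / (2 * L * M)) * h.
Proof.
move=> L0 M0 /andP[h0 hG] /andP[N0 NM] N0G0.
set q := Num.min (1 / 2) _; set s := Num.min 1 _.
have q_half : q <= 1 / 2 by rewrite ge_min lexx.
have q_LM : q * (2 * L * M) <= 1.
  by rewrite -ler_pdivlMr ?mulr_gt0 // /q ge_min lexx orbT.
have q0 : 0 <= q by rewrite le_min !divr_ge0 ?mulr_ge0 ?ltW.
have [N_eq0 | N_neq0] := eqVneq N 0.
  (* the step length is min 1 (G / 0) = 0 here *)
  have G0 := N0G0 N_eq0; have -> : h = 0 by lra.
  by rewrite N_eq0 G0 !mulr0 addr0.
have LN0 : 0 < L * N by rewrite mulr_gt0 // lt_def N_neq0.
have [GLN | LNG] := lerP G (L * N).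
  have sE : s * (L * N) = G by rewrite /s min_r ?divfK ?gt_eqF // ler_pdivrMr // mul1r.
  have -> : L / 2 * s ^+ 2 * N = s * G / 2 by rewrite -sE; ring.
  (* q h L N <= q h L M h <= h^2 / 2 <= G^2 / 2 = s G L N / 2 *)
  suff : q * h * (L * N) <= s * G / 2 * (L * N) by rewrite ler_pM2r //; lra.
  have : q * h * (L * N) <= q * h * (L * (M * h)).
    by rewrite ler_wpM2l ?mulr_ge0 // ler_wpM2l // ltW.
  have : q * (2 * L * M) * (h * h) <= h * h by rewrite ler_piMl ?mulr_ge0.
  have : h * h <= G * G by rewrite ler_pM.
  have : G * G = s * G * (L * N) by rewrite -{1}sE; ring.
  lra.
have -> : s = 1 by rewrite /s min_l // ler_pdivlMr // mul1r ltW.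
have : q * h <= 1 / 2 * h by rewrite ler_wpM2r.
by rewrite expr1n mulr1; lra.
Qed.

Definition short_step_length (R : realType) (m : nat) (L : R)
    (g : 'rV[R]_m -> 'rV[R]_m) (x v : 'rV[R]_m) :=
  Num.min 1 (dotp (g x) (x - v) / (L * sqnorm (v - x))).

Definition lmo_vertex (R : realType) (m : nat) (C : set 'rV[R]_m)
    (g : 'rV[R]_m -> 'rV[R]_m) (x v : 'rV[R]_m) :=
  C v /\ forall w, C w -> dotp (g x) v <= dotp (g x) w.

Section FrankWolfeStep.
Variables (R : realType) (m : nat) (C : set 'rV[R]_m).
Variables (f : 'rV[R]_m -> R) (g : 'rV[R]_m -> 'rV[R]_m) (L k : R) (xs : 'rV[R]_m).
Hypotheses (f_grad : is_gradient f g) (f_conv : convex_fun f).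
Hypotheses (g_smooth : L_smooth L g) (L_gt0 : 0 < L) (k_gt0 : 0 < k).
Hypotheses (C_xs : C xs)
  (growth : forall y, C y -> k * sqnorm (y - xs) <= dotp (g xs) (y - xs)).
Implicit Types (x v y : 'rV[R]_m).

Definition fw_modulus := 2 * (L ^+ 2 + k ^+ 2) / k ^+ 3.

Definition fw_rate := Num.min (1 / 2) (1 / (2 * L * fw_modulus)).

Lemma fw_modulus_gt0 : 0 < fw_modulus.
Proof. by rewrite /fw_modulus !mulr_gt0 ?invr_gt0 ?addr_gt0 ?exprn_gt0. Qed.

Lemma fw_rate_gt0 : 0 < fw_rate.
Proof. by rewrite /fw_rate lt_min !divr_gt0 // (mulr_gt0 (mulr_gt0 _ L_gt0) fw_modulus_gt0). Qed.

Lemma fw_rate_le_half : fw_rate <= 1 / 2.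
Proof. by rewrite /fw_rate ge_min lexx. Qed.

Lemma growth_error_bound y : C y -> k * sqnorm (y - xs) <= f y - f xs.
Proof. by move=> Cy; have := growth Cy; have := convex_gradient_le f_grad xs y f_conv; lra. Qed.

Lemma fw_gap_ge x v : lmo_vertex C g x v -> f x - f xs <= dotp (g x) (x - v).
Proof.
move=> [_ v_min]; have := v_min xs C_xs; have := convex_gradient_le f_grad x xs f_conv.
by rewrite !dotpBr; lra.
Qed.

Lemma lmo_vertex_sqnorm x v : lmo_vertex C g x v ->
  k ^+ 2 * sqnorm (v - xs) <= L ^+ 2 * sqnorm (x - xs).
Proof.
move=> [Cv v_min]; set w := v - xs; set u := g xs - g x.
have gx_w : dotp (g x) w <= 0 by rewrite dotpBr subr_le0 v_min.
have u_sq : sqnorm u <= L ^+ 2 * sqnorm (x - xs).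
  by rewrite -sqnormN opprB; apply: L_smooth_sqnorm => //; apply: ltW.
have lin : k * sqnorm w <= dotp u w.
  by have := growth Cv; rewrite -/w /u dotpBl; lra.
have k2_ge0 : 0 <= 2 * k by rewrite mulr_ge0 // ltW.
have := ler_wpM2r k2_ge0 lin.
by have := dotp_young u w k; lra.
Qed.

Lemma lmo_direction_sqnorm x v : C x -> lmo_vertex C g x v ->
  sqnorm (v - x) <= fw_modulus * (f x - f xs).
Proof.
move=> Cx xv; have := lmo_vertex_sqnorm xv; have := growth_error_bound Cx.
have := sqnormD_le (v - xs) (xs - x); rewrite addrA subrK -[sqnorm (xs - x)]sqnormN opprB.
set a := sqnorm (v - xs); set b := sqnorm (x - xs); set h := f x - f xs.
move=> vx_le bh ak; have k2 : 0 < k ^+ 2 by rewrite exprn_gt0.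
(* k^3 |v - x|^2 <= 2 k (k^2 a) + 2 k^2 (k b) <= 2 k (L^2 b) + 2 k^2 h <= 2 (L^2 + k^2) h *)
rewrite /fw_modulus mulrAC ler_pdivlMr ?exprn_gt0 //.
have := ler_wpM2l (ltW k_gt0) ak; have := ler_wpM2l (ltW k2) bh.
have := ler_wpM2l (sqr_ge0 L) bh; have := ler_wpM2l (ltW (exprn_gt0 3 k_gt0)) vx_le.
rewrite !exprS expr0 !mulr1; lra.
Qed.

Lemma fw_short_step_contraction x v y : C x -> lmo_vertex C g x v ->
  f y <= f (x + short_step_length L g x v *: (v - x)) ->
  f y - f xs <= (1 - fw_rate) * (f x - f xs).
Proof.
rewrite /short_step_length.
set G := dotp (g x) (x - v); set N := sqnorm (v - x); set s := Num.min 1 _.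
move=> Cx xv fy_le.
have hG := fw_gap_ge xv; rewrite -/G in hG.
have h0 : 0 <= f x - f xs.
  by apply: le_trans (growth_error_bound Cx); rewrite mulr_ge0 ?sqnorm_ge0 ?ltW.
have NM := lmo_direction_sqnorm Cx xv; rewrite -/N in NM.
have N_ge0 : 0 <= N := sqnorm_ge0 _.
have N0G0 : N = 0 -> G = 0.
  by move=> /sqnorm_eq0 vx0; rewrite /G -opprB vx0 oppr0 /dotp big1 // => i _; rewrite mxE mulr0.
have s01 : 0 <= s <= 1.
  by rewrite ge_min lexx le_min ler01 divr_ge0 ?mulr_ge0 ?(ltW L_gt0) // (le_trans h0 hG).
have := smooth_descent f_grad x (v - x) L_gt0 g_smooth s01.
have -> : dotp (g x) (v - x) = - G by rewrite /G -dotpNr opprB.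
have := short_step_decrease L_gt0 fw_modulus_gt0 (introT andP (conj h0 hG))
  (introT andP (conj N_ge0 NM)) N0G0.
rewrite -/s -/N -/fw_rate; lra.
Qed.

End FrankWolfeStep.

Section FrankWolfeRun.
Variables (R : realType) (m : nat) (C : set 'rV[R]_m).
Variables (f : 'rV[R]_m -> R) (g : 'rV[R]_m -> 'rV[R]_m) (L : R).
Variables (x v : nat -> 'rV[R]_m) (gam : nat -> R).
Hypotheses (C_seg : segment_closed C) (fw : FW_iterates C g x v gam) (L_gt0 : 0 < L).

Lemma FW_lmo_vertex t : lmo_vertex C g (x t) (v t).
Proof. by have [_ /(_ t) []] := fw. Qed.

Lemma short_step_length_in01 t : C (x t) -> 0 <= short_step_length L g (x t) (v t) <= 1.
Proof.
have [_ v_min] := FW_lmo_vertex t; move=> Cxt.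
rewrite ge_min lexx le_min ler01 divr_ge0 ?mulr_ge0 ?sqnorm_ge0 ?(ltW L_gt0) //.
by rewrite dotpBr subr_ge0 v_min.
Qed.

Lemma FW_iterates_mem (step01 : forall t, C (x t) -> 0 <= gam t <= 1) t : C (x t).
Proof.
have [Cx0 fw_step] := fw; elim: t => // t Cxt.
by have [Cvt _ ->] := fw_step t; apply: C_seg => //; exact: step01.
Qed.

Lemma FW_step_le_short_step (linesearch : bool) :
  (if linesearch then exact_ls_step f x v gam else short_step L g x v gam) ->
  forall t, C (x t) -> 0 <= gam t <= 1 /\
    f (x t.+1) <= f (x t + short_step_length L g (x t) (v t) *: (v t - x t)).
Proof.
have [_ fw_step] := fw; move=> step t Cxt; have [_ _ ->] := fw_step t.
case: linesearch step => [/(_ t) [gam01 gam_min] | gam_short].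
  by split=> //; apply/gam_min/short_step_length_in01.
by rewrite gam_short -/(sqnorm _) enorm_sqr; split=> //; exact: short_step_length_in01.
Qed.

End FrankWolfeRun.

Lemma geometric_bound (R : realDomainType) (u : nat -> R) (r : R) :
  0 <= r -> (forall t, u t.+1 <= r * u t) -> forall t, u t <= u 0%N * r ^+ t.
Proof.
move=> r0 u_step; elim=> [|t IH]; first by rewrite mulr1.
by apply: le_trans (u_step t) _; rewrite exprS mulrCA ler_wpM2l.
Qed.

Lemma enorm_gt0_coord (R : realType) (m : nat) (u : 'rV[R]_m) :
  0 < enorm u -> exists j, u ord0 j != 0.
Proof.
move=> u_gt0; apply/existsP; apply: contraTT u_gt0 => /existsPn u0.
rewrite /enorm /dotp big1 ?sqrtr0 ?ltxx // => i _.
by move/negPn/eqP: (u0 i) => ->; rewrite mul0r.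
Qed.

Unset Implicit Arguments.

Theorem mainTheorem3 (R : realType) (m : nat) (p L c : R)
  (f : 'rV[R]_m -> R) (g : 'rV[R]_m -> 'rV[R]_m) (xstar : 'rV[R]_m)
  (linesearch : bool) (x v : nat -> 'rV[R]_m) (gam : nat -> R) :
  2 < p ->
  0 < L ->
  is_gradient f g ->
  convex_fun f ->
  L_smooth L g ->
  0 < c ->
  (* inf_{x in C} ||grad f(x)|| > c *)
  (exists2 c' : R, c < c' & forall y, lpball p y -> c' <= enorm (g y)) ->
  (* xstar is the minimizer of f over C *)
  lpball p xstar ->
  (forall y, lpball p y -> f xstar <= f y) ->
  (forall i : 'I_m, xstar ord0 i != 0) ->
  (* a Frank-Wolfe run, with exact line-search or with short steps *)
  FW_iterates (lpball p) g x v gam ->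
  (if linesearch then exact_ls_step f x v gam else short_step L g x v gam) ->
  exists K : R, exists2 rho : R, 0 < K /\ 0 < rho < 1 &
    forall t : nat, f (x t) - f xstar <= K * rho ^+ t.
Proof.
move=> p2 L_gt0 f_grad f_conv g_smooth c_gt0 [c' cc' g_ge] Cxs xs_min xs_nz fw step.
have C_seg : segment_closed (@lpball R m p) by apply: lpball_segment_closed; lra.
have [j gj] : exists j, g xstar ord0 j != 0.
  by apply/enorm_gt0_coord/(lt_le_trans _ (g_ge _ Cxs))/(lt_trans c_gt0).
have [k k_gt0 growth] := lpball_linear_growth p2 gj Cxs xs_nz
  (segment_closed_min_variational f_grad C_seg Cxs xs_min).
have step_spec := FW_step_le_short_step fw L_gt0 step.
have Cx := FW_iterates_mem C_seg fw (fun t Cxt => (step_spec t Cxt).1).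
have contraction t : f (x t.+1) - f xstar <= (1 - fw_rate L k) * (f (x t) - f xstar).
  exact: (fw_short_step_contraction f_grad f_conv g_smooth L_gt0 k_gt0 Cxs growth
    (Cx t) (FW_lmo_vertex fw t) (step_spec t (Cx t)).2).
have rate_gt0 := fw_rate_gt0 L_gt0 k_gt0; have rate_half := fw_rate_le_half L k.
have h0 : 0 <= f (x 0%N) - f xstar by rewrite subr_ge0; exact: xs_min (Cx 0%N).
exists (f (x 0%N) - f xstar + 1), (1 - fw_rate L k); first by split; lra.
move=> t; apply: le_trans (geometric_bound _ contraction t) _; first lra.
by rewrite ler_wpM2r ?exprn_ge0 //; lra.
Qed.
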